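(* Given a positive integer $k$ and an integer $q$ with $|q|\le 2^k$, there is a connected finite simple graph $G$ with $\phi_3(G)=k$ and $I(G;-1)=q$.
   Context: For a finite simple graph $G$, the independence polynomial is $I(G;x)=\sum_{k\ge 0} i_k(G)x^k$, where $i_k(G)$ is the number of independent sets of $G$ of size $k$ (with $i_0(G)=1$, counting the empty set). A $\tilde{3}$-cycle is a cycle whose length is divisible by $3$. A graph is called ternary if it contains no induced $\tilde{3}$-cycle. A set $D\subseteq V(G)$ is a $\tilde{3}$-decycling set of $G$ if $G-D$ is ternary. The ternary decycling number $\phi_3(G)$ is the minimum size of a $\tilde{3}$-decycling set of $G$. *)

From mathcomp Require Import all_boot all_order all_algebra.
Set Implicit Arguments. Unset Strict Implicit. Unset Printing Implicit Defensive.
Import GRing.Theory Num.Theory.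

Section Graphs.
Variable T : finType.
Variable e : rel T.

Definition simple_graph : Prop := symmetric e /\ irreflexive e.

Definition connected_graph : bool :=
  (0 < #|T|)%N && [forall x, forall y, connect e x y].

Definition independent (S : {set T}) : bool :=
  [forall x in S, forall y in S, ~~ e x y].

Definition indep_poly : {poly int} :=
  \sum_(S : {set T} | independent S) 'X^#|S|.

(* f enumerates, in cyclic order, the vertices of an induced cycle of length n
   (n >= 3 is imposed where used): f is injective, and f i, f j are adjacent
   exactly when they are consecutive along the cycle. *)
Definition induced_cycle (n : nat) (f : {ffun 'I_n -> T}) : bool :=
  injectiveb f &&
  [forall i : 'I_n, forall j : 'I_n,
     e (f i) (f j) == ((val j == (val i).+1 %% n) || (val i == (val j).+1 %% n))].

Definition ternary_on (A : {set T}) : bool :=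
  ~~ [exists n : 'I_(#|T|).+1,
        [&& (2 < n)%N, (3 %| n)%N &
          [exists f : {ffun 'I_n -> T},
             [forall i, f i \in A] && induced_cycle f]]].

Definition decycling3 (D : {set T}) : bool := ternary_on (~: D).

(* ternary decycling number: minimum size of a 3~-decycling set
   (setT is always one, so the default #|T| is attained) *)
Definition phi3 : nat :=
  \big[minn/#|T|]_(D : {set T} | decycling3 D) #|D|.

End Graphs.

From mathcomp Require Import all_boot all_order all_algebra.
From mathcomp Require Import zify ring.
Set Implicit Arguments. Unset Strict Implicit. Unset Printing Implicit Defensive.
Import Order.TTheory GRing.Theory.

(* Hang k gadgets on a path: gadget j is a stretch of six path vertices
   together with a hub adjacent to three consecutive vertices of the stretch,
   and also to the first one when bit j of a chosen word is 0.  The gadgets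
   carry k disjoint triangles and deleting the hubs leaves a path, so
   phi3 = k.  Each gadget meets the rest of the graph in a single edge, and
   the recursion I(G) = I(G - v) - I(G - N[v]) at its first vertex shows that
   it doubles I(-1) and, when its bit is 1, subtracts I(P_(m-1); -1), where
   P_m is the initial path.  Thus I(G; -1) = 2^k I(P_m; -1) - s I(P_(m-1); -1)
   for any 0 <= s < 2^k, and the 6-periodic values 1, 0, -1, -1, 0, 1 of
   I(P_n; -1) make every |q| <= 2^k reachable. *)

Section IndependenceSeq.
Local Open Scope ring_scope.

(* I(-1) of the graph [adj] induced on the list [s];
   [n] is fuel and must be at least [size s]. *)
Fixpoint indepm1_seq (adj : rel nat) (n : nat) (s : seq nat) : int :=
  if n is n'.+1 then
    if s is w :: s' then
      indepm1_seq adj n' s' - indepm1_seq adj n' [seq z <- s' | ~~ adj w z]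
    else 1
  else 1.

Lemma indepm1_seq_map (adj adj' : rel nat) (f : nat -> nat) n s :
  {in s &, forall a b, adj (f a) (f b) = adj' a b} ->
  indepm1_seq adj n (map f s) = indepm1_seq adj' n s.
Proof.
elim: n s => [|n IH] [|a s] //= H.
have Hs : {in s &, forall a b, adj (f a) (f b) = adj' a b}.
  by move=> u v us vs; apply: H; rewrite inE ?us ?vs orbT.
rewrite filter_map !IH //.
- congr (_ - indepm1_seq _ _ _); apply: eq_in_filter => z zs /=.
  by rewrite H // !inE ?zs ?eqxx ?orbT.
- by move=> u v; rewrite !mem_filter => /andP[_ us] /andP[_ vs]; apply: Hs.
Qed.

End IndependenceSeq.

Section IndependencePolynomialAtMinusOne.
Variables (T : finType) (e : rel T).
Hypotheses (e_sym : symmetric e) (e_irr : irreflexive e).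
Local Open Scope ring_scope.

Definition indepm1 (A : {set T}) : int :=
  \sum_(S : {set T} | (S \subset A) && independent e S) (-1) ^+ #|S|.

Definition closed_nbhd v : {set T} := v |: [set u | e v u].

Lemma horner_indep_poly_m1 : (indep_poly e).[-1] = indepm1 setT.
Proof.
rewrite horner_sum; apply: eq_big => [S|S _]; first by rewrite subsetT.
by rewrite hornerXn.
Qed.

Lemma indepm1_set0 : indepm1 set0 = 1.
Proof.
rewrite /indepm1 (big_pred1 set0) ?cards0 // => S.
rewrite subset0 andb_idr // => /eqP ->.
by apply/forall_inP => x; rewrite inE.
Qed.

Lemma independentP (S : {set T}) :
  reflect {in S &, forall x y, ~~ e x y} (independent e S).
Proof.
apply: (iffP forall_inP) => [H x y xS|H x xS]; first exact: (forall_inP (H x xS)).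
by apply/forall_inP => y yS; apply: H.
Qed.

Lemma independentU1 v (S : {set T}) :
  independent e (v |: S) = independent e S && [forall u in S, ~~ e v u].
Proof.
apply/independentP/andP => [H|[/independentP H /forall_inP Hv] x y].
  split.
    by apply/independentP => x y xS yS; apply: H; rewrite !inE ?xS ?yS orbT.
  by apply/forall_inP => u uS; apply: H; rewrite !inE ?uS ?eqxx ?orbT.
rewrite !inE => /predU1P[->|xS] /predU1P[->|yS].
- by rewrite e_irr.
- exact: Hv.
- by rewrite e_sym Hv.
- exact: H.
Qed.

Lemma indepm1_del v (A : {set T}) : v \in A ->
  indepm1 A = indepm1 (A :\ v) - indepm1 (A :\: closed_nbhd v).
Proof.
move=> vA; rewrite /indepm1 (bigID (fun S : {set T} => v \in S)) /= addrC.
congr (_ + _).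
  apply: eq_bigl => S; rewrite andbAC; congr (_ && _).
  by rewrite subsetD1 andbC.
rewrite (reindex_onto (fun S => v |: S) (fun S => S :\ v)); last first.
  by move=> S /andP[_ vS]; rewrite setD1K.
rewrite -sumrN; apply: eq_big => [S|S /andP[_ /eqP <-]]; last first.
  by rewrite cardsU1 !inE eqxx /= exprS mulN1r.
rewrite setU11 andbT independentU1.
have notin_nbhd x : x \notin closed_nbhd v = (x != v) && ~~ e v x.
  by rewrite !inE negb_or.
apply/idP/idP => [/andP[/and3P[sA iS /forall_inP nv] /eqP eS]|/andP[sAN iS]].
  have vS : v \notin S by rewrite -eS !inE eqxx.
  rewrite iS andbT; apply/subsetP => x xS.
  rewrite inE notin_nbhd nv // (subsetP sA) ?inE ?xS ?orbT // !andbT.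
  by apply: contraNneq vS => <-.
have nS x : x \in S -> (x != v) && ~~ e v x && (x \in A).
  by move=> /(subsetP sAN); rewrite inE notin_nbhd.
have vS : v \notin S by apply/negP => /nS; rewrite eqxx.
rewrite setU1K // eqxx iS andbT subUset sub1set vA /=.
apply/andP; split; first by apply/subsetP => x /nS /andP[].
by apply/forall_inP => x /nS /andP[/andP[]].
Qed.

Lemma indepm1U (A B : {set T}) : [disjoint A & B] ->
  {in A & B, forall a b, ~~ e a b} -> indepm1 (A :|: B) = indepm1 A * indepm1 B.
Proof.
have [n] := ubnP #|B|; elim: n B => // n IH B /ltnSE Bn dAB nAB.
have [->|[v vB]] := set_0Vmem B; first by rewrite setU0 indepm1_set0 mulr1.
have vA : v \notin A by rewrite (disjointFl dAB vB).
have nbhdA : A :\: closed_nbhd v = A.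
  apply/setDidPl; rewrite -setI_eq0; apply/eqP/setP => a; rewrite !inE.
  case: (boolP (a \in A)) => [aA|//].
  by rewrite e_sym (negbTE (nAB a v aA vB)) orbF; apply: contraNF vA => /eqP <-.
have IHsub (B' : {set T}) : B' \proper B -> indepm1 (A :|: B') = indepm1 A * indepm1 B'.
  move=> pB; have sB := proper_sub pB; apply: IH.
  - exact: leq_trans (proper_card pB) Bn.
  - exact: disjointWr sB dAB.
  - by move=> a b aA /(subsetP sB); apply: nAB.
have pBN : B :\: closed_nbhd v \proper B.
  by apply: sub_proper_trans (properD1 vB); apply: setDS; rewrite sub1set !inE eqxx.
rewrite (indepm1_del (v := v)) ?inE ?vB ?orbT // (indepm1_del vB) mulrBr.
rewrite !setDUl nbhdA (setDidPl _ : A :\ v = A) ?IHsub ?properD1 //.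
by rewrite disjoint_sym disjoints1.
Qed.

Lemma indepm1_bridge (A B : {set T}) x y :
    [disjoint A & B] -> x \in A -> y \in B -> e x y ->
    {in A & B, forall a b, e a b -> a = x /\ b = y} ->
  indepm1 (A :|: B) =
    indepm1 A * indepm1 (B :\ y) - indepm1 (A :\ x) * indepm1 (B :\: closed_nbhd y).
Proof.
move=> dAB xA yB exy only_xy.
have yA : y \notin A by rewrite (disjointFl dAB yB).
have nbhdA : A :\: closed_nbhd y = A :\ x.
  apply/setP => a; rewrite !inE; case: (boolP (a \in A)) => [aA|]; rewrite ?andbT ?andbF //.
  have [->|nax] := eqVneq a x; first by rewrite e_sym exy orbT.
  rewrite e_sym; case: (boolP (e a y)) => [/(only_xy a y aA yB)[/eqP]|_].
    by rewrite (negbTE nax).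
  by rewrite orbF; apply: contraNneq yA => <-.
have dA (A' B' : {set T}) : A' \subset A -> B' \subset B -> [disjoint A' & B'].
  by move=> sA sB; apply: disjointW sA sB dAB.
rewrite (indepm1_del (v := y)) ?inE ?yB ?orbT //.
rewrite !setDUl nbhdA (setDidPl _ : A :\ y = A); last by rewrite disjoint_sym disjoints1.
rewrite !indepm1U ?dA ?subsetDl //.
  move=> a b; rewrite !inE => /andP[nax aA] /andP[_ bB]; apply/negP.
  by move=> /(only_xy a b aA bB)[/eqP]; rewrite (negbTE nax).
move=> a b aA; rewrite !inE => /andP[nby bB]; apply/negP.
by move=> /(only_xy a b aA bB)[_ /eqP]; rewrite (negbTE nby).
Qed.

Lemma indepm1_seqE (lab : T -> nat) (adj : rel nat) :
    injective lab -> (forall u v, e u v = adj (lab u) (lab v)) ->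
  forall n s, (size s <= n)%N -> uniq s -> {subset s <= codom lab} ->
  indepm1 [set u | lab u \in s] = indepm1_seq adj n s.
Proof.
move=> lab_inj e_adj.
have nil_case n : indepm1 [set u | lab u \in [::]] = indepm1_seq adj n [::].
  by case: n => [|n]; rewrite /= -indepm1_set0; congr indepm1; apply/setP => u; rewrite !inE.
elim=> [|n IH] s; first by rewrite leqn0 size_eq0 => /eqP -> *; apply: nil_case.
case: s => [|w s] sn; first by move=> *; apply: nil_case.
move=> /andP[ws us] s_lab /=.
have /codomP[v wv] : w \in codom lab by apply: s_lab; rewrite inE eqxx.
have lab_eqw u : (lab u == w) = (u == v) by rewrite wv (inj_eq lab_inj).
rewrite (indepm1_del (v := v)) ?inE ?lab_eqw ?eqxx //; congr (_ - _); rewrite -IH //.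
- congr indepm1; apply/setP => u; rewrite !inE lab_eqw.
  by case: eqVneq => [->|]; rewrite -?wv ?(negbTE ws).
- by move=> z zs; apply: s_lab; rewrite inE zs orbT.
- congr indepm1; apply/setP => u; rewrite !inE mem_filter lab_eqw e_adj -wv.
  by case: eqVneq => [->|]; rewrite -?wv ?(negbTE ws) ?andbF // andbC.
- by rewrite size_filter (leq_trans (count_size _ _)).
- exact: filter_uniq.
- by move=> z; rewrite mem_filter => /andP[_ zs]; apply: s_lab; rewrite inE zs orbT.
Qed.

End IndependencePolynomialAtMinusOne.

Lemma ordSS_neq n (i : 'I_n) : 2 < n -> ordS (ordS i) != i.
Proof.
rewrite -val_eqE /=; case: i => i /=.
rewrite leq_eqVlt => /predU1P[<-|lt] n2; first by rewrite modnn modn_small; lia.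
rewrite (modn_small lt); move: lt n2; rewrite leq_eqVlt => /predU1P[<-|lt] n2.
  by rewrite modnn; lia.
by rewrite modn_small; lia.
Qed.

Section Ternary.
Variables (T : finType) (e : rel T).
Hypotheses (e_sym : symmetric e) (e_irr : irreflexive e).

(* On an induced cycle, the vertex of largest rank has two distinct neighbours
   of smaller rank. *)
Lemma ternary_on_rank (A : {set T}) (rk : T -> nat) : {in A &, injective rk} ->
    (forall v u1 u2, v \in A -> u1 \in A -> u2 \in A -> e v u1 -> e v u2 ->
       rk u1 < rk v -> rk u2 < rk v -> u1 = u2) ->
  ternary_on e A.
Proof.
move=> rk_inj down_uniq; apply/negP.
case/existsP=> n /and3P[n2 _ /existsP[f /and3P[/forallP fA /injectiveP f_inj /forallP f_cyc]]].
have [i _ i_max] := @arg_maxnP _ (Ordinal (ltnW (ltnW n2))) predT (fun i => rk (f i)) isT.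
have e_next : e (f i) (f (ordS i)) by rewrite (eqP (forallP (f_cyc i) _)) eqxx.
have e_prev : e (f i) (f (ord_pred i)).
  rewrite (eqP (forallP (f_cyc i) _)); apply/orP; right.
  by rewrite -[in X in X == _](ord_predK i).
have lower j : e (f i) (f j) -> rk (f j) < rk (f i).
  move=> eij; have le_ji : rk (f j) <= rk (f i) := i_max j isT.
  rewrite ltn_neqAle le_ji andbT; apply: contraTneq eij.
  by move/(rk_inj _ _ (fA j) (fA i)) ->; rewrite e_irr.
have /f_inj/(congr1 (@ordS _)) := down_uniq _ _ _ (fA i) (fA _) (fA _) e_next e_prev
  (lower _ e_next) (lower _ e_prev).
by rewrite ord_predK; apply/eqP; apply: ordSS_neq.
Qed.

Lemma triangle_not_ternary (A : {set T}) a b c : a \in A -> b \in A -> c \in A ->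
  e a b -> e b c -> e a c -> ~~ ternary_on e A.
Proof.
move=> aA bA cA eab ebc eac; rewrite negbK.
have nab : a != b by apply: contraTneq eab => ->; rewrite e_irr.
have nbc : b != c by apply: contraTneq ebc => ->; rewrite e_irr.
have nac : a != c by apply: contraTneq eac => ->; rewrite e_irr.
have /card_uniqP abc3 : uniq [:: a; b; c] by rewrite /= !inE negb_or nab nac nbc.
have T3 : 3 < #|T|.+1 by rewrite ltnS -[3]/(size [:: a; b; c]) -abc3 max_card.
apply/existsP; exists (Ordinal T3); rewrite /=; apply/existsP.
exists [ffun i : 'I_3 => nth a [:: a; b; c] i]; apply/and3P; split.
- by apply/forallP => i; rewrite ffunE; case: i => -[|[|[|]]].
- apply/injectiveP => i j; rewrite !ffunE.
  case: i => -[|[|[|]]] // ?; case: j => -[|[|[|]]] // ? /= h; apply: val_inj => //=;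
    by move: nab nbc nac; rewrite h eqxx.
apply/forallP => i; apply/forallP => j; rewrite !ffunE.
case: i => -[|[|[|]]] // ?; case: j => -[|[|[|]]] // ? /=;
  by rewrite ?e_irr ?eab ?ebc ?eac // e_sym ?eab ?ebc ?eac.
Qed.

Lemma decycling3_triangles (I : finType) (a b c : I -> T) (D : {set T}) :
    (forall i, [&& e (a i) (b i), e (b i) (c i) & e (a i) (c i)]) ->
    (forall i j x, x \in [set a i; b i; c i] -> x \in [set a j; b j; c j] -> i = j) ->
  decycling3 e D -> #|I| <= #|D|.
Proof.
move=> tri disj dD.
pose hit i := odflt (a i) [pick x in D :&: [set a i; b i; c i]].
have hitP i : hit i \in D :&: [set a i; b i; c i].
  rewrite /hit; case: pickP => [//|none]; case/and3P: (tri i) => eab ebc eac.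
  have outD x : x \in [set a i; b i; c i] -> x \in ~: D.
    by move=> x_tri; rewrite inE; apply: contraFN (none x) => xD; rewrite inE xD.
  move: dD; rewrite /decycling3 (negbTE (triangle_not_ternary _ _ _ eab ebc eac)) //;
    by apply: outD; rewrite !inE eqxx ?orbT.
have hit_inj : injective hit.
  move=> i j hij; case/setIP: (hitP i) => _ hi; case/setIP: (hitP j) => _ hj.
  by apply: (disj i j (hit j)); rewrite // -hij.
rewrite -cardsT -(card_imset _ hit_inj); apply: subset_leq_card.
by apply/subsetP => _ /imsetP[i _ ->]; case/setIP: (hitP i).
Qed.

Lemma phi3_eq (D0 : {set T}) k : decycling3 e D0 -> #|D0| = k ->
  (forall D, decycling3 e D -> k <= #|D|) -> phi3 e = k.
Proof.
move=> dD0 <- lb; apply/eqP; rewrite eqn_leq /phi3; apply/andP; split.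
  by rewrite -minEnat; exact: (@bigmin_le_cond _ _ _ #|T| D0 _ (fun D => #|D|) dD0).
by elim/big_ind: _ => [|a b ha hb|D /lb //]; rewrite ?max_card ?leq_min ?ha.
Qed.

End Ternary.

Section ChainValue.
Local Open Scope ring_scope.

Fixpoint chain_val (q0 r : int) (b : nat -> bool) (j : nat) : int :=
  if j is j'.+1 then 2 * chain_val q0 r b j' - (b j')%:Z * r else q0.

Lemma eq_chain_val q0 r (b b' : nat -> bool) k : {in gtn k, b =1 b'} ->
  chain_val q0 r b k = chain_val q0 r b' k.
Proof.
elim: k => //= k IH bb'; rewrite bb' ?inE // IH // => j jk.
by apply: bb'; rewrite inE ltnW.
Qed.

(* Binary expansion of [s], most significant bit first. *)
Lemma chain_val_bits q0 r k s : (s < 2 ^ k)%N ->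
  exists b, chain_val q0 r b k = (2 ^ k)%N%:Z * q0 - r * s%:Z.
Proof.
elim: k s => [|k IH] s s_lt.
  exists xpred0; move: s_lt; rewrite expn0 ltnS leqn0 => /eqP -> /=.
  by rewrite mul1r mulr0 subr0.
have [|b Hb] := IH s./2; first by move: s_lt; rewrite expnS -(odd_double_half s); lia.
exists (fun j => if j == k then odd s else b j) => /=.
rewrite eqxx (@eq_chain_val _ _ _ b) => [|j]; last by rewrite inE => /ltn_eqF ->.
rewrite Hb -{3}(odd_double_half s) expnS PoszM -muln2 PoszD PoszM.
ring.
Qed.

End ChainValue.

Definition path_adj (a c : nat) : bool := (a.+1 == c) || (c.+1 == a).

Definition path_m1 n : int := indepm1_seq path_adj n (iota 0 n).

Section Construction.
Variables (m' K : nat) (b : nat -> bool).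

(* Vertices [0, L) form a path.  Gadget j consists of the path segment
   [m + 6j, m + 6j + 6) and of the hub L + j, which is joined to the positions
   1, 2, 3 of the segment, and also to position 0 when [b j] is false. *)
Local Notation m := m'.+1.
Local Notation L := (m + 6 * K).
Local Notation V := 'I_(m' + 7 * K).+1.

Definition hub_edge (u w : nat) : bool :=
  [&& u < L, L <= w & (m + 6 * (w - L) < u <= m + 6 * (w - L) + 3)
                      || ~~ b (w - L) && (u == m + 6 * (w - L))].

Definition adj (u v : nat) : bool :=
  [&& u < L, v < L & path_adj u v] || hub_edge u v || hub_edge v u.

Definition edge : rel V := fun u v => adj u v.

Lemma edge_sym : symmetric edge.
Proof. by move=> u v; rewrite /edge /adj /path_adj; apply/idP/idP; lia. Qed.

Lemma edge_irr : irreflexive edge.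
Proof. by move=> u; rewrite /edge /adj /hub_edge /path_adj; lia. Qed.

Definition gvert j a := if a < 6 then m + 6 * j + a else L + j.

Definition gadget_hub_edge (c : bool) a d :=
  [&& a < 6, d == 6 & (1 <= a <= 3) || ~~ c && (a == 0)].

Definition gadj (c : bool) (a d : nat) : bool :=
  [&& a < 6, d < 6 & path_adj a d] || gadget_hub_edge c a d || gadget_hub_edge c d a.

Lemma gvert_lt j a : j < K -> a < 7 -> gvert j a < (m' + 7 * K).+1.
Proof. by rewrite /gvert; case: ifP; lia. Qed.

Lemma gvert_inj j a d : j < K -> a < 7 -> d < 7 -> gvert j a = gvert j d -> a = d.
Proof. by rewrite /gvert; case: ifP; case: ifP; lia. Qed.

Lemma adj_gvert j a d : j < K -> a < 7 -> d < 7 ->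
  adj (gvert j a) (gvert j d) = gadj (b j) a d.
Proof.
rewrite /adj /hub_edge /gadj /gadget_hub_edge /path_adj /gvert => jK a7 d7.
by case: ifP => a6; case: ifP => d6; rewrite ?addKn; case: (b j); apply/idP/idP; lia.
Qed.

Definition gset j (t : seq nat) : {set V} := [set u : V | val u \in map (gvert j) t].

Local Notation gadget j := (gset j (iota 0 7)).

Lemma val_inord_gvert j a : j < K -> a < 7 -> (inord (gvert j a) : V) = gvert j a :> nat.
Proof. by move=> jK a7; rewrite inordK // gvert_lt. Qed.

Lemma inord_gvert_eq j a d : j < K -> a < 7 -> d < 7 ->
  (inord (gvert j a) == inord (gvert j d) :> V) = (a == d).
Proof.
move=> jK a7 d7; apply/eqP/eqP => [|-> //].
by move/(congr1 val) => /=; rewrite !val_inord_gvert //; apply: gvert_inj.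
Qed.

Lemma indepm1_gset j t : j < K -> uniq t -> all (gtn 7) t ->
  indepm1 edge (gset j t) = indepm1_seq (gadj (b j)) (size t) t.
Proof.
move=> jK t_uniq /allP t7.
rewrite -(@indepm1_seq_map adj _ (gvert j)); last first.
  by move=> a d /t7 a7 /t7 d7; apply: adj_gvert.
apply: (indepm1_seqE edge_sym edge_irr val_inj) => //.
- by rewrite size_map.
- by rewrite map_inj_in_uniq // => a d /t7 a7 /t7 d7; apply: gvert_inj.
- move=> _ /mapP[a /t7 a7 ->]; apply/codomP.
  by exists (inord (gvert j a)); rewrite /= val_inord_gvert.
Qed.

Lemma gset_filter j t (P : pred V) (p : pred nat) : j < K -> all (gtn 7) t ->
    {in gtn 7, forall a, P (inord (gvert j a)) = p a} ->
  [set u in gset j t | P u] = gset j [seq a <- t | p a].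
Proof.
move=> jK /allP t7 Pp; apply/setP => u; rewrite !inE.
have u_gvert a : a \in t -> val u = gvert j a -> u = inord (gvert j a).
  by move=> /t7 a7 ua; apply: val_inj; rewrite /= val_inord_gvert.
apply/andP/mapP => [[/mapP[a a_t ua] Pu]|[a + ua]].
  have a7 := t7 a a_t.
  by exists a => //; rewrite mem_filter a_t andbT -Pp ?inE // -(u_gvert a).
rewrite mem_filter => /andP[pa a_t]; split; first by apply/mapP; exists a.
by have a7 := t7 a a_t; rewrite (u_gvert a) // Pp ?inE.
Qed.

(* The only edge between [prefix j] (below) and gadget j joins these two. *)
Definition ptail j : V := inord (m' + 6 * j).
Definition ghead j : V := inord (gvert j 0).

Lemma gset_D1 j t d : j < K -> d < 7 -> all (gtn 7) t ->
  gset j t :\ inord (gvert j d) = gset j [seq a <- t | a != d].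
Proof.
move=> jK d7 t7; rewrite -(gset_filter (P := fun u => u != inord (gvert j d))) //.
  by apply/setP => u; rewrite !inE andbC.
by move=> a a7 /=; rewrite inord_gvert_eq.
Qed.

Lemma gset_Dnbhd j t : j < K -> all (gtn 7) t ->
  gset j t :\: closed_nbhd edge (ghead j) =
  gset j [seq a <- t | (a != 0) && ~~ gadj (b j) 0 a].
Proof.
move=> jK t7; rewrite -(gset_filter (P := fun u => u \notin closed_nbhd edge (ghead j))) //.
  by apply/setP => u; rewrite !inE andbC.
move=> a a7 /=; rewrite !inE inord_gvert_eq // /edge /ghead !val_inord_gvert //.
by rewrite adj_gvert // negb_or.
Qed.

Lemma ptailS j : j < K -> ptail j.+1 = inord (gvert j 5).
Proof. by move=> jK; apply: val_inj; rewrite /= val_inord_gvert // inordK /gvert /=; lia. Qed.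

Lemma gadget_values j : j < K ->
  [/\ indepm1 edge (gadget j :\ ghead j) = 2,
      indepm1 edge (gadget j :\: closed_nbhd edge (ghead j)) = b j,
      indepm1 edge ((gadget j :\ ptail j.+1) :\ ghead j) = 0 &
      indepm1 edge ((gadget j :\ ptail j.+1) :\: closed_nbhd edge (ghead j)) = -1]%R.
Proof.
move=> jK; rewrite ptailS // /ghead.
have t7 : all (gtn 7) (iota 0 7) by [].
have t7' : all (gtn 7) [seq a <- iota 0 7 | a != 5] by [].
rewrite !gset_D1 // !gset_Dnbhd // !indepm1_gset //.
all: by case: (b j).
Qed.

Definition prefix j : {set V} := [set u : V | (u < m + 6 * j) || (L <= u < L + j)].

Lemma val_ptail j : j <= K -> ptail j = m' + 6 * j :> nat.
Proof. by move=> jK; rewrite inordK; lia. Qed.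

Lemma val_ghead j : j < K -> ghead j = m + 6 * j :> nat.
Proof. by move=> jK; rewrite val_inord_gvert // /gvert /= addn0. Qed.

Lemma mem_gadget j (u : V) : j < K ->
  (u \in gadget j) = (m + 6 * j <= u < m + 6 * j + 6) || (u == L + j :> nat).
Proof.
move=> jK; rewrite inE; apply/mapP/idP => [[a]|u_gadget].
  by rewrite mem_iota /gvert /=; case: ifP; lia.
have [u_hub|u_path] := boolP (u == L + j :> nat).
  by exists 6; rewrite ?mem_iota // /gvert /= (eqP u_hub).
exists (u - (m + 6 * j)); first by rewrite mem_iota; lia.
by rewrite /gvert /=; case: ifP; lia.
Qed.

Lemma prefixS j : j < K -> prefix j.+1 = prefix j :|: gadget j.
Proof.
move=> jK; apply/setP => u; rewrite in_setU mem_gadget // !inE.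
by have := ltn_ord u; lia.
Qed.

Lemma gadget_bridge j (B : {set V}) : j < K -> B \subset gadget j -> ghead j \in B ->
  indepm1 edge (prefix j :|: B) =
    (indepm1 edge (prefix j) * indepm1 edge (B :\ ghead j) -
     indepm1 edge (prefix j :\ ptail j) * indepm1 edge (B :\: closed_nbhd edge (ghead j)))%R.
Proof.
move=> jK sB yB.
have inB u : u \in B -> (m + 6 * j <= u < m + 6 * j + 6) || (u == L + j :> nat).
  by move=> /(subsetP sB); rewrite mem_gadget.
apply: (indepm1_bridge edge_sym edge_irr) yB _ _.
- rewrite disjoint_subset; apply/subsetP => u; rewrite !inE => u_pre.
  by apply/negP => /inB; lia.
- by rewrite inE (val_ptail (ltnW jK)); lia.
- by rewrite /edge (val_ptail (ltnW jK)) val_ghead // /adj /path_adj; lia.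
move=> u w; rewrite inE => u_pre /inB w_gadget.
rewrite /edge /adj /hub_edge /path_adj => e_uw.
by split; apply: val_inj; rewrite /= ?(val_ptail (ltnW jK)) ?val_ghead //; lia.
Qed.

Lemma indepm1_prefixS j : j < K ->
  indepm1 edge (prefix j.+1) =
    (2 * indepm1 edge (prefix j) - (b j)%:Z * indepm1 edge (prefix j :\ ptail j))%R /\
  indepm1 edge (prefix j.+1 :\ ptail j.+1) = indepm1 edge (prefix j :\ ptail j).
Proof.
move=> jK; have [g1 g2 g3 g4] := gadget_values jK.
have y_gadget : ghead j \in gadget j by rewrite mem_gadget // val_ghead //; lia.
rewrite prefixS // setDUl (setDidPl _ : prefix j :\ ptail j.+1 = prefix j); last first.
  by rewrite disjoint_sym disjoints1 inE val_ptail //; lia.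
rewrite !gadget_bridge ?subsetDl // ?g1 ?g2 ?g3 ?g4; first by split; ring.
by rewrite in_setD1 y_gadget andbT -val_eqE /= val_ptail // val_ghead //; lia.
Qed.

Lemma indepm1_path n : n <= m ->
  indepm1 edge [set u : V | val u \in iota 0 n] = path_m1 n.
Proof.
move=> nm; rewrite (@indepm1_seqE _ _ edge_sym edge_irr _ adj val_inj _ n) //;
  rewrite ?size_iota ?iota_uniq //.
  rewrite /path_m1 -{1}(map_id (iota 0 n)) (@indepm1_seq_map _ path_adj) // => a c.
  by rewrite !mem_iota /adj /hub_edge /path_adj => ? ?; apply/idP/idP; lia.
move=> w; rewrite mem_iota => w_lt; apply/codomP.
by exists (inord w); rewrite /= inordK; lia.
Qed.

Lemma indepm1_prefix0 :
  indepm1 edge (prefix 0) = path_m1 m /\ indepm1 edge (prefix 0 :\ ptail 0) = path_m1 m'.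
Proof.
split; rewrite -indepm1_path //; congr indepm1; apply/setP => u.
  by rewrite !in_set mem_iota /=; lia.
by rewrite in_setD1 !in_set mem_iota -val_eqE /= val_ptail //; lia.
Qed.

Lemma indepm1_prefix j : j <= K ->
  indepm1 edge (prefix j) = chain_val (path_m1 m) (path_m1 m') b j /\
  indepm1 edge (prefix j :\ ptail j) = path_m1 m'.
Proof.
elim: j => [|j IH] jK; first exact: indepm1_prefix0.
have [IH1 IH2] := IH (ltnW jK).
by have [-> ->] := indepm1_prefixS jK; rewrite IH1 IH2.
Qed.

Lemma indepm1_edge : indepm1 edge setT = chain_val (path_m1 m) (path_m1 m') b K.
Proof.
have -> : setT = prefix K by apply/setP => u; rewrite !inE; have := ltn_ord u; lia.
by case: (indepm1_prefix (leqnn K)).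
Qed.

Lemma connect_path i : i < L -> connect edge ord0 (inord i).
Proof.
elim: i => [|i IH] iL.
  by rewrite (_ : inord 0 = ord0) //; apply: val_inj; rewrite /= inordK.
apply: connect_trans (IH (ltnW iL)) (connect1 _).
by rewrite /edge !inordK /adj /path_adj; lia.
Qed.

Lemma connected_edge : connected_graph edge.
Proof.
have from0 (u : V) : connect edge ord0 u.
  have [uL|Lu] := ltnP u L; first by rewrite -(inord_val u); apply: connect_path.
  have hub_nbr : m + 6 * (u - L) + 1 < L by have := ltn_ord u; lia.
  apply: connect_trans (connect_path hub_nbr) (connect1 _).
  by rewrite /edge inordK /adj /hub_edge; lia.
apply/andP; split; first by rewrite card_ord.
apply/forallP => u; apply/forallP => v.
by apply: connect_trans (from0 v); rewrite (sym_connect_sym edge_sym).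
Qed.

Definition hubs : {set V} := [set u : V | L <= u].

Lemma decycling3_hubs : decycling3 edge hubs.
Proof.
apply: (ternary_on_rank edge_irr (rk := val)); first by move=> ? ? _ _; apply: val_inj.
move=> v u1 u2; rewrite !inE /edge /adj /hub_edge /path_adj /= => *.
by apply: val_inj => /=; lia.
Qed.

Lemma card_hubs : #|hubs| = K.
Proof.
pose hub (j : 'I_K) : V := inord (L + j).
have val_hub j : hub j = L + j :> nat by rewrite inordK //; have := ltn_ord j; lia.
have hub_inj : injective hub.
  by move=> i j /(congr1 val); rewrite /= !val_hub => /addnI /val_inj.
have -> : hubs = hub @: setT.
  apply/setP => u; rewrite inE; apply/idP/imsetP => [Lu|[j _ ->]]; last first.
    by rewrite val_hub leq_addr.
  have uK : u - L < K by have := ltn_ord u; lia.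
  by exists (Ordinal uK) => //; apply: val_inj; rewrite /= val_hub /=; lia.
by rewrite card_imset // cardsT card_ord.
Qed.

Lemma decycling3_card_geq D : decycling3 edge D -> K <= #|D|.
Proof.
pose tri k (j : 'I_K) : V := inord (if k < 2 then m + 6 * j + k.+1 else L + j).
have val_tri k j : k < 3 -> tri k j = (if k < 2 then m + 6 * j + k.+1 else L + j) :> nat.
  by move=> k3; rewrite inordK //; have := ltn_ord j; case: ifP; lia.
rewrite -[X in X <= _](card_ord K).
apply: (decycling3_triangles edge_sym edge_irr (a := tri 0) (b := tri 1) (c := tri 2)).
  move=> j; have := ltn_ord j.
  by rewrite /edge !val_tri //= /adj /hub_edge /path_adj ?addKn; lia.
move=> i j x; have := ltn_ord i; have := ltn_ord j.
by rewrite !inE -!val_eqE /= !val_tri //= => *; apply: val_inj => /=; lia.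
Qed.

Lemma phi3_edge : phi3 edge = K.
Proof. exact: phi3_eq decycling3_hubs card_hubs decycling3_card_geq. Qed.

End Construction.

Local Open Scope ring_scope.

Lemma exists_graph_value m' k s : (s < 2 ^ k)%N ->
  exists (T : finType) (e : rel T),
    [/\ simple_graph e, connected_graph e, phi3 e = k &
        (indep_poly e).[-1] = (2 ^ k)%N%:Z * path_m1 m'.+1 - path_m1 m' * s%:Z].
Proof.
move=> s_lt; have [b Hb] := chain_val_bits (path_m1 m'.+1) (path_m1 m') s_lt.
exists _, (@edge m' k b); split.
- by split; [exact: edge_sym | exact: edge_irr].
- exact: connected_edge.
- exact: phi3_edge.
- by rewrite horner_indep_poly_m1 indepm1_edge.
Qed.

Theorem corollary2p2 (k : nat) (q : int) :
  (0 < k)%N -> (`|q|%N <= 2 ^ k)%N ->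
  exists (T : finType) (e : rel T),
    [/\ simple_graph e, connected_graph e, phi3 e = k &
        (indep_poly e).[-1] = q].
Proof.
move=> _ q_le.
suff [m' [s [s_lt ->]]] : exists m' s,
    (s < 2 ^ k)%N /\ q = (2 ^ k)%N%:Z * path_m1 m'.+1 - path_m1 m' * s%:Z.
  exact: exists_graph_value.
case: q q_le => [[|n]|n] /= q_le.
- by exists 0%N, 0%N; rewrite expn_gt0 /= mulr0 subr0.
- exists 5%N, (2 ^ k - n.+1)%N; have -> : path_m1 6 = 1 by []; have -> : path_m1 5 = 1 by [].
  split; lia.
- exists 2%N, (2 ^ k - n.+1)%N; have -> : path_m1 3 = -1 by []; have -> : path_m1 2 = -1 by [].
  by rewrite NegzE; split; lia.
Qed.
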